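(* Let $G$ be a simple graph on $n$ vertices with $cM_2(G)\ge cM_2(H)$ for every simple graph $H$ on $n$ vertices, and let $F$, $Y$ be as defined in the context. If $u,v\in Y$ and $uv\in E(G)$, then $uv$ is not an undirected edge of $F$ (equivalently, $d_G(u)\ne d_G(v)$).
   Context: All graphs are finite and simple; $d_G(u)$ is the degree of $u$ and $cM_2(G)=\sum_{uv\in E(G)}|d_G(u)^2-d_G(v)^2|$. The canonical mixed graph $F$ of $G$ has vertex set $V(G)$; for each edge $uv\in E(G)$: if $d_G(u)>d_G(v)$ then $F$ contains the arc $\overrightarrow{uv}$, and if $d_G(u)=d_G(v)$ then $F$ contains the undirected edge $uv$. $d^+_F(u)$ (resp. $d^-_F(u)$) is the number of arcs of $F$ with tail (resp. head) $u$. $Y=\{u\in V(G): d^+_F(u)< d^-_F(u)\}$. *)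

From mathcomp Require Import all_boot all_order.
Set Implicit Arguments. Unset Strict Implicit. Unset Printing Implicit Defensive.

Record sgraph (T : finType) := SGraph {
  adj : rel T;
  adj_sym : symmetric adj;
  adj_irr : irreflexive adj }.

Definition deg (T : finType) (G : sgraph T) (u : T) : nat := #|[set v | adj G u v]|.

Definition absdiff (a b : nat) : nat := (a - b) + (b - a).

(* cM_2(G) = sum over edges uv of |d(u)^2 - d(v)^2|; each unordered edge
   counted once: sum over ordered pairs halved is avoided by summing over
   pairs (u,v) with u < v in the enumeration order of 'I_n. *)
Definition cM2 (n : nat) (G : sgraph 'I_n) : nat :=
  \sum_(u : 'I_n) \sum_(v : 'I_n | (u < v) && adj G u v)
     absdiff (deg G u ^ 2) (deg G v ^ 2).

Definition arcF (T : finType) (G : sgraph T) (u v : T) : bool :=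
  adj G u v && (deg G v < deg G u).
Definition undirF (T : finType) (G : sgraph T) (u v : T) : bool :=
  adj G u v && (deg G u == deg G v).

Definition outdegF (T : finType) (G : sgraph T) (u : T) : nat := #|[set v | arcF G u v]|.
Definition indegF (T : finType) (G : sgraph T) (u : T) : nat := #|[set v | arcF G v u]|.

Definition Yset (T : finType) (G : sgraph T) : {set T} :=
  [set u | outdegF G u < indegF G u].

(* Deleting an edge uv with d(u) = d(v) = d leaves that edge's contribution at 0 and
   changes every other edge at u by 2d - 1: up towards neighbours of degree >= d and
   down towards neighbours of degree < d.  As u is in Y, the neighbours of larger
   degree (the in-arcs of u in F) outnumber those of smaller degree (the out-arcs),
   so the edges at u gain in total, and likewise at v.  Edges avoiding u and v keep
   their degrees, so cM_2 strictly increases, contradicting maximality. *)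
From mathcomp Require Import all_boot all_order.
From mathcomp Require Import zify.
Set Implicit Arguments. Unset Strict Implicit. Unset Printing Implicit Defensive.

Lemma absdiff_predn_sqr d e : 0 < d ->
  absdiff (d.-1 ^ 2) (e ^ 2) + (2 * d - 1) * (e < d) =
  absdiff (d ^ 2) (e ^ 2) + (2 * d - 1) * (d <= e).
Proof.
case: d => // d _; rewrite /absdiff /=.
case: (ltnP e d.+1) => [lt_ed | le_de] /=.
  have : e ^ 2 <= d ^ 2 by rewrite leq_exp2r.
  rewrite !expnS !expn0 !muln1; nia.
have : d.+1 ^ 2 <= e ^ 2 by rewrite leq_exp2r.
rewrite !expnS !expn0 !muln1; nia.
Qed.

Lemma sum_nat_of_bool (T : finType) (b : pred T) : \sum_x (b x : nat) = #|[set x | b x]|.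
Proof.
rewrite -sum1_card [RHS]big_mkcond /=.
by apply: eq_bigr => x _; rewrite inE; case: (b x).
Qed.

Lemma sum_sym_ord n (f : 'I_n -> 'I_n -> nat) : (forall x y, f x y = f y x) ->
  \sum_x \sum_y f x y = 2 * \sum_(x : 'I_n) \sum_(y : 'I_n | x < y) f x y + \sum_x f x x.
Proof.
move=> fC.
have split_row (x : 'I_n) : \sum_y f x y =
    \sum_(y : 'I_n | x < y) f x y + \sum_(y : 'I_n | y < x) f x y + f x x.
  rewrite (bigD1 x) //= addnC (bigID (fun y : 'I_n => x < y)) /=; congr (_ + _ + _).
    by apply: eq_bigl => y; case: (eqVneq y x) => [-> | _]; rewrite ?ltnn.
  apply: eq_bigl => y; rewrite -leqNgt leq_eqVlt val_eqE.
  by case: (eqVneq y x) => [->|] /=; rewrite ?ltnn.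
rewrite (eq_bigr _ (fun x _ => split_row x)) !big_split /=.
rewrite (exchange_big_dep xpredT) //=; congr (_ + _).
rewrite mul2n -addnn; congr (_ + _); apply: eq_bigr => x _.
by apply: eq_bigr => y _; apply: fC.
Qed.

(* [f u v] is counted twice in each of the two rows and once in each column. *)
Lemma sum_sym_two_rows (T : finType) (f : T -> T -> nat) (u v : T) :
  u != v -> (forall x y, f x y = f y x) ->
  \sum_x \sum_y f x y + (f u u + f v v + 2 * f u v) =
  2 * (\sum_y f u y + \sum_y f v y) +
    \sum_(x | (x != u) && (x != v)) \sum_(y | (y != u) && (y != v)) f x y.
Proof.
move=> neq_uv fC.
have split_uv (g : T -> nat) :
    \sum_y g y = g u + g v + \sum_(y | (y != u) && (y != v)) g y.
  rewrite (bigD1 u) //= (bigD1 v) /= 1?eq_sym // addnA.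
  by congr (_ + _); apply: eq_bigl => y; rewrite andbC.
rewrite {1}split_uv (eq_bigr _ (fun x _ => split_uv (f x))) !big_split /=.
have col_u : \sum_(x | (x != u) && (x != v)) f x u = \sum_y f u y - f u u - f u v.
  by rewrite (split_uv (f u)) (eq_bigr _ (fun x _ => fC x u)); lia.
have col_v : \sum_(x | (x != u) && (x != v)) f x v = \sum_y f v y - f v u - f v v.
  by rewrite (split_uv (f v)) (eq_bigr _ (fun x _ => fC x v)); lia.
rewrite col_u col_v (split_uv (f u)) (split_uv (f v)) (fC v u); lia.
Qed.

Section Graphs.
Variable T : finType.
Implicit Types (G : sgraph T) (u v x y : T).

Lemma adj_neq G x y : adj G x y -> x != y.
Proof. by apply: contraTneq => ->; rewrite adj_irr. Qed.

Definition edge_weight G x y : nat :=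
  if adj G x y then absdiff (deg G x ^ 2) (deg G y ^ 2) else 0.

Lemma edge_weightC G x y : edge_weight G x y = edge_weight G y x.
Proof. by rewrite /edge_weight (adj_sym G); case: adj; rewrite // /absdiff addnC. Qed.

Lemma edge_weight_xx G x : edge_weight G x x = 0.
Proof. by rewrite /edge_weight (adj_irr G). Qed.

Lemma edge_weight_eq_deg G x y : deg G x = deg G y -> edge_weight G x y = 0.
Proof. by move=> eq_d; rewrite /edge_weight eq_d /absdiff subnn; case: adj. Qed.

Lemma eq_edge_weight G G' : adj G =2 adj G' -> edge_weight G =2 edge_weight G'.
Proof.
move=> eq_adj x y; have eq_deg z : deg G z = deg G' z.
  by apply: eq_card => w; rewrite !inE eq_adj.
by rewrite /edge_weight eq_adj !eq_deg.
Qed.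

Definition delete_edge_rel G u v : rel T :=
  fun x y => adj G x y && ~~ ((x == u) && (y == v) || (x == v) && (y == u)).

Lemma delete_edge_rel_sym G u v : symmetric (delete_edge_rel G u v).
Proof.
move=> x y; rewrite /delete_edge_rel (adj_sym G) orbC.
by congr (_ && ~~ (_ || _)); apply: andbC.
Qed.

Lemma delete_edge_rel_irr G u v : irreflexive (delete_edge_rel G u v).
Proof. by move=> x; rewrite /delete_edge_rel (adj_irr G). Qed.

Definition delete_edge G u v : sgraph T :=
  SGraph (delete_edge_rel_sym G u v) (delete_edge_rel_irr G u v).

Lemma adj_delete_edgeC G u v : adj (delete_edge G u v) =2 adj (delete_edge G v u).
Proof. by move=> x y; rewrite /= /delete_edge_rel orbC. Qed.

Lemma adj_delete_edge_l G u v y :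
  u != v -> adj (delete_edge G u v) u y = adj G u y && (y != v).
Proof. by move=> neq_uv; rewrite /= /delete_edge_rel eqxx (negbTE neq_uv) orbF. Qed.

Lemma adj_delete_edge_other G u v x y :
  x != u -> x != v -> adj (delete_edge G u v) x y = adj G x y.
Proof. by move=> xu xv; rewrite /= /delete_edge_rel (negbTE xu) (negbTE xv) andbT. Qed.

Lemma deg_delete_edge_other G u v x :
  x != u -> x != v -> deg (delete_edge G u v) x = deg G x.
Proof.
by move=> xu xv; apply: eq_card => y; rewrite !inE adj_delete_edge_other.
Qed.

Lemma deg_delete_edge_l G u v :
  adj G u v -> deg (delete_edge G u v) u = (deg G u).-1.
Proof.
move=> Auv; have neq_uv := adj_neq Auv.
rewrite /deg (cardsD1 v [set y | adj G u y]) inE Auv add1n succnK.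
by apply: eq_card => y; rewrite !inE adj_delete_edge_l // andbC.
Qed.

Lemma edge_weight_delete_edge_other G u v x y :
  x != u -> x != v -> y != u -> y != v ->
  edge_weight (delete_edge G u v) x y = edge_weight G x y.
Proof.
move=> xu xv yu yv.
by rewrite /edge_weight adj_delete_edge_other // !deg_delete_edge_other.
Qed.

(* The per-neighbour change is [absdiff_predn_sqr]; the neighbours of degree < d are
   the out-arcs of u, and those of degree >= d other than v include all its in-arcs. *)
Lemma row_weight_delete_edge G u v :
  adj G u v -> deg G u = deg G v -> u \in Yset G ->
  \sum_y edge_weight G u y < \sum_y edge_weight (delete_edge G u v) u y.
Proof.
move=> Auv eq_d Yu.
have neq_uv := adj_neq Auv.
set d := deg G u; set c := 2 * d - 1.
have d_gt0 : 0 < d by rewrite /d /deg (cardsD1 v) inE Auv.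
pose up y := [&& adj G u y, y != v & d <= deg G y].
have change y : edge_weight (delete_edge G u v) u y + c * arcF G u y =
                edge_weight G u y + c * up y.
  rewrite /edge_weight adj_delete_edge_l // /arcF /up.
  case Auy: (adj G u y) => //=; case: (eqVneq y v) => [-> | yv] /=.
    by rewrite -eq_d /absdiff subnn ltnn !muln0.
  have yu : y != u by rewrite eq_sym (adj_neq Auy).
  by rewrite deg_delete_edge_l // deg_delete_edge_other // absdiff_predn_sqr.
have sum_change : \sum_y edge_weight (delete_edge G u v) u y + c * outdegF G u =
                  \sum_y edge_weight G u y + c * #|[set y | up y]|.
  rewrite /outdegF -!sum_nat_of_bool !big_distrr -!big_split /=.
  by apply: eq_bigr => y _; apply: change.
have in_up : indegF G u <= #|[set y | up y]|.
  apply: subset_leq_card; apply/subsetP => y; rewrite !inE /arcF /up.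
  case/andP=> Ayu lt_dy; rewrite (adj_sym G) Ayu (ltnW lt_dy) andbT.
  by apply: contraTneq lt_dy => ->; rewrite -eq_d ltnn.
have out_in : outdegF G u < indegF G u by rewrite inE in Yu.
have : c * outdegF G u < c * indegF G u by rewrite ltn_pmul2l /c; lia.
by move: sum_change in_up; nia.
Qed.

Lemma sum_edge_weight_delete_edge G u v :
  adj G u v -> deg G u = deg G v -> u \in Yset G -> v \in Yset G ->
  \sum_x \sum_y edge_weight G x y < \sum_x \sum_y edge_weight (delete_edge G u v) x y.
Proof.
move=> Auv eq_d Yu Yv; set H := delete_edge G u v.
have neq_uv := adj_neq Auv.
have row_u : \sum_y edge_weight G u y < \sum_y edge_weight H u y
  by exact: row_weight_delete_edge.
have row_v : \sum_y edge_weight G v y < \sum_y edge_weight H v y.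
  rewrite (eq_bigr _ (fun y _ => eq_edge_weight (adj_delete_edgeC G u v) v y)).
  by apply: row_weight_delete_edge; rewrite 1?(adj_sym G).
have core : \sum_(x | (x != u) && (x != v)) \sum_(y | (y != u) && (y != v)) edge_weight H x y =
            \sum_(x | (x != u) && (x != v)) \sum_(y | (y != u) && (y != v)) edge_weight G x y.
  apply: eq_bigr => x /andP[xu xv]; apply: eq_bigr => y /andP[yu yv].
  exact: edge_weight_delete_edge_other.
have gap_H : edge_weight H u v = 0.
  by rewrite /edge_weight adj_delete_edge_l // eqxx andbF.
have := sum_sym_two_rows neq_uv (edge_weightC G).
have := sum_sym_two_rows neq_uv (edge_weightC H).
rewrite !edge_weight_xx gap_H edge_weight_eq_deg // core; lia.
Qed.

End Graphs.

Lemma cM2_double_sum n (G : sgraph 'I_n) :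
  \sum_x \sum_y edge_weight G x y = 2 * cM2 G.
Proof.
rewrite sum_sym_ord; last exact: edge_weightC.
rewrite [X in _ + X]big1 ?addn0 => [|x _]; last exact: edge_weight_xx.
by congr (2 * _); apply: eq_bigr => x _; rewrite big_mkcondr.
Qed.

Theorem claim2 (n : nat) (G : sgraph 'I_n)
  (Hmax : forall H : sgraph 'I_n, cM2 H <= cM2 G)
  (u v : 'I_n) (hu : u \in Yset G) (hv : v \in Yset G) (huv : adj G u v) :
  ~~ undirF G u v.
Proof.
apply/negP => /andP[_ /eqP eq_d].
have := sum_edge_weight_delete_edge huv eq_d hu hv.
by rewrite !cM2_double_sum ltn_pmul2l // ltnNge Hmax.
Qed.
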